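(* A homomorphism $a:X\to G$ is a generalized subgroup of $G$ if and only if (a) $\mathrm{Ker}(a)$ is contained in the center of $X$, and (b) $\mathrm{Hom}(X,\mathrm{Ker}(a))=0$.
   Context: A homomorphism $a:X\to G$ is a generalized subgroup of $G$ if the map $\mathrm{Hom}(X,X)\to\mathrm{Hom}(X,G)$, $f\mapsto af$, is injective. $\mathrm{Hom}(A,B)=0$ means the only homomorphism $A\to B$ is trivial. *)

From Stdlib Require Import Classical.

Set Implicit Arguments.
Unset Strict Implicit.

Record Group := MkGroup {
  carrier :> Type;
  gmul : carrier -> carrier -> carrier;
  gone : carrier;
  ginv : carrier -> carrier;
  gmulA : forall x y z, gmul x (gmul y z) = gmul (gmul x y) z;
  gmul1g : forall x, gmul gone x = x;
  gmulg1 : forall x, gmul x gone = x;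
  gmulVg : forall x, gmul (ginv x) x = gone;
  gmulgV : forall x, gmul x (ginv x) = gone
}.

Arguments gmul {g}.
Arguments gone {g}.
Arguments ginv {g}.

Definition is_hom {X G : Group} (f : X -> G) : Prop :=
  forall x y : X, f (gmul x y) = gmul (f x) (f y).

Definition in_ker {X G : Group} (a : X -> G) (x : X) : Prop := a x = gone.

Definition in_center {X : Group} (z : X) : Prop :=
  forall x : X, gmul z x = gmul x z.

Lemma hom_one {X G : Group} (a : X -> G) : is_hom a -> a gone = gone.
Proof.
  intro Ha.
  assert (H : a gone = gmul (a gone) (a gone)).
  { rewrite <- Ha. rewrite gmul1g. reflexivity. }
  assert (H2 : gmul (ginv (a gone)) (a gone)
               = gmul (ginv (a gone)) (gmul (a gone) (a gone))) by (rewrite <- H; reflexivity).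
  rewrite gmulA, gmulVg, gmul1g in H2. symmetry; exact H2.
Qed.

Lemma hom_inv {X G : Group} (a : X -> G) (x : X) :
  is_hom a -> a (ginv x) = ginv (a x).
Proof.
  intro Ha.
  assert (H : gmul (a (ginv x)) (a x) = gone).
  { rewrite <- Ha, gmulVg. apply hom_one; exact Ha. }
  assert (H2 : gmul (gmul (a (ginv x)) (a x)) (ginv (a x)) = gmul gone (ginv (a x)))
    by (rewrite H; reflexivity).
  rewrite <- gmulA, gmulgV, gmulg1, gmul1g in H2. exact H2.
Qed.

Section Kernel.
Variables (X G : Group) (a : X -> G) (Ha : is_hom a).

Definition ker_type := { x : X | a x = gone }.

Definition ker_mul (u v : ker_type) : ker_type.
Proof.
  refine (exist _ (gmul (proj1_sig u) (proj1_sig v)) _).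
  rewrite Ha, (proj2_sig u), (proj2_sig v). apply gmul1g.
Defined.

Definition ker_one : ker_type := exist _ gone (hom_one Ha).

Definition ker_inv (u : ker_type) : ker_type.
Proof.
  refine (exist _ (ginv (proj1_sig u)) _).
  rewrite (hom_inv _ Ha), (proj2_sig u).
  rewrite <- (gmul1g (ginv gone)). apply gmulgV.
Defined.

Lemma ker_eq (u v : ker_type) : proj1_sig u = proj1_sig v -> u = v.
Proof.
  destruct u as [x px], v as [y py]; simpl; intro E; subst y.
  rewrite (proof_irrelevance _ px py); reflexivity.
Qed.

Definition kernel_group : Group.
Proof.
  refine (@MkGroup ker_type ker_mul ker_one ker_inv _ _ _ _ _);
  intros; apply ker_eq; simpl;
  [apply gmulA | apply gmul1g | apply gmulg1 | apply gmulVg | apply gmulgV].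
Defined.

End Kernel.

Definition generalized_subgroup {X G : Group} (a : X -> G) : Prop :=
  forall f g : X -> X, is_hom f -> is_hom g ->
    (forall x, a (f x) = a (g x)) -> forall x, f x = g x.

Definition hom_zero (A B : Group) : Prop :=
  forall h : A -> B, is_hom h -> forall x, h x = gone.

(* Everything rests on two ways of moving between pairs of endomorphisms of X
   with the same image under a, and homomorphisms into the kernel:
   - two homomorphisms f, g whose "difference" y |-> g(y)^-1 f(y) takes central
     values have a difference which is itself a homomorphism; when a o f = a o g
     it lands in Ker(a) (lemma [hom_diff_hom]);
   - conversely, twisting the identity by a central-valued homomorphism h,
     x |-> x h(x), is an endomorphism, and so is conjugation by any element;
     both agree with the identity after a when h, resp. the conjugating
     element, lies in Ker(a) ([twist_hom], [conj_hom]). *)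

Section GroupCalculus.
Context {X : Group}.

Lemma mulgKV (x y : X) : gmul (gmul x (ginv y)) y = x.
Proof. rewrite <- gmulA, gmulVg, gmulg1. reflexivity. Qed.

Lemma mulgI (x y z : X) : gmul x y = gmul x z -> y = z.
Proof.
  intro E.
  assert (E' : gmul (ginv x) (gmul x y) = gmul (ginv x) (gmul x z))
    by (rewrite E; reflexivity).
  rewrite !gmulA, gmulVg, !gmul1g in E'. exact E'.
Qed.

Lemma invg1 : ginv (@gone X) = gone.
Proof. rewrite <- (gmul1g (ginv gone)). apply gmulgV. Qed.

Lemma invgM (x y : X) : ginv (gmul x y) = gmul (ginv y) (ginv x).
Proof.
  apply (mulgI (gmul x y)). rewrite gmulgV.
  rewrite gmulA, <- (gmulA x y), gmulgV, gmulg1, gmulgV. reflexivity.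
Qed.

Definition conjg (k x : X) : X := gmul (gmul k x) (ginv k).

Lemma conj_hom (k : X) : is_hom (conjg k).
Proof. intros u v. unfold conjg. rewrite !gmulA, mulgKV. reflexivity. Qed.

Lemma conj_id_central (k : X) : (forall x, conjg k x = x) -> in_center k.
Proof. intros E x. rewrite <- (E x) at 2. unfold conjg. rewrite mulgKV. reflexivity. Qed.

Lemma twist_hom (h : X -> X) :
  is_hom h -> (forall x, in_center (h x)) -> is_hom (fun x => gmul x (h x)).
Proof.
  intros Hh Hc u v. rewrite Hh, !gmulA. f_equal.
  rewrite <- !gmulA. f_equal. symmetry. apply Hc.
Qed.

Lemma hom_diff_hom {Y : Group} (f g : Y -> X) :
  is_hom f -> is_hom g ->
  (forall y, in_center (gmul (ginv (g y)) (f y))) ->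
  is_hom (fun y => gmul (ginv (g y)) (f y)).
Proof.
  intros Hf Hg Hc u v. rewrite Hf, Hg, invgM.
  transitivity (gmul (gmul (ginv (g v)) (gmul (ginv (g u)) (f u))) (f v)).
  { rewrite !gmulA. reflexivity. }
  rewrite <- (Hc u (ginv (g v))), !gmulA. reflexivity.
Qed.

End GroupCalculus.

Section KernelMaps.
Context {X G : Group} {a : X -> G} (Ha : is_hom a).

Lemma ker_val_hom {Y : Group} {h : Y -> kernel_group Ha} :
  is_hom h -> is_hom (fun y => proj1_sig (h y)).
Proof. intros Hh u v. rewrite Hh. reflexivity. Qed.

Definition ker_corestr {Y : Group} {u : Y -> X} (Hu : forall y, a (u y) = gone)
  : Y -> kernel_group Ha :=
  fun y => exist _ (u y) (Hu y).

Lemma ker_corestr_hom {Y : Group} {u : Y -> X} (Hu : forall y, a (u y) = gone) :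
  is_hom u -> is_hom (ker_corestr Hu).
Proof. intros Hu' v w. apply ker_eq. apply Hu'. Qed.

Lemma conj_ker {k : X} : in_ker a k -> forall x, a (conjg k x) = a x.
Proof.
  intros Hk x. unfold conjg.
  rewrite !Ha, (hom_inv _ Ha), Hk, invg1, gmul1g, gmulg1. reflexivity.
Qed.

Lemma hom_diff_ker {f g : X -> X} :
  (forall x, a (f x) = a (g x)) -> forall x, a (gmul (ginv (g x)) (f x)) = gone.
Proof. intros E x. rewrite Ha, (hom_inv _ Ha), E, gmulVg. reflexivity. Qed.

End KernelMaps.

Theorem proposition4p2 (X G : Group) (a : X -> G) (Ha : is_hom a) :
  generalized_subgroup a <->
  ((forall k : X, in_ker a k -> in_center k) /\
   hom_zero X (kernel_group Ha)).
Proof.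
  split.
  - intro GS.
    (* Conjugation by k in Ker(a) agrees with the identity after a. *)
    assert (Cen : forall k : X, in_ker a k -> in_center k).
    { intros k Hk. apply conj_id_central.
      apply GS; [apply conj_hom | intros u v; reflexivity | apply (conj_ker Ha Hk)]. }
    split; [exact Cen |].
    (* x |-> x h(x) agrees with the identity after a, hence h = 1. *)
    intros h Hh x.
    assert (Ex : gmul x (proj1_sig (h x)) = x).
    { apply (GS (fun x => gmul x (proj1_sig (h x))) (fun x => x)).
      - apply twist_hom; [exact (ker_val_hom Ha Hh) |].
        intro u. apply Cen. exact (proj2_sig (h u)).
      - intros u v; reflexivity.
      - intro u. rewrite Ha, (proj2_sig (h u)), gmulg1. reflexivity. }
    apply ker_eq. apply (mulgI x). simpl. rewrite gmulg1. exact Ex.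
  - (* The difference of f and g is a homomorphism X -> Ker(a), hence trivial. *)
    intros [Cen HZ] f g Hf Hg E x.
    pose proof (hom_diff_ker Ha E) as Kd.
    assert (Hd : is_hom (ker_corestr Ha Kd)).
    { apply ker_corestr_hom, hom_diff_hom; [exact Hf | exact Hg |].
      intro u. apply Cen, Kd. }
    pose proof (f_equal (@proj1_sig _ _) (HZ _ Hd x)) as Dx. simpl in Dx.
    apply (mulgI (ginv (g x))). rewrite Dx, gmulVg. reflexivity.
Qed.
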